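(* Let $h>0$, $\mathbb{T}:=\{0,h,2h,\ldots\}$, $p_0,p_1\in\mathbb{C}\setminus\{-\tfrac1h\}$ with $p_0\ne p_1$, and define $p:\mathbb{T}\to\mathbb{C}$ by $p(t)=p_0$ if $\tfrac th$ is even and $p(t)=p_1$ if $\tfrac th$ is odd. Let $f:\mathbb{T}\times\mathbb{C}\to\mathbb{C}$ and consider $$\Delta_h\phi(t)-p(t)\phi(t)=f(t,\phi(t)),\qquad t\in\mathbb{T},\qquad(\ast\ast)$$ with $\Delta_h\phi(t):=\frac{\phi(t+h)-\phi(t)}{h}$. Let $\delta>0$ be arbitrary. Suppose there exists $L>0$ with $|f(t,\phi)|\le L$ for all $(t,\phi)\in\mathbb{T}\times\mathbb{C}$, and that all solutions of $(\ast\ast)$ exist on $\mathbb{T}$. If $0<|1+hp_0||1+hp_1|<1$, then all solutions of $(\ast\ast)$ are uniform-ultimately bounded for the bound $LK_0+\delta$, where $$K_0:=h\max\left\{\frac{1+|1+hp_0|}{\big|1-|1+hp_0||1+hp_1|\big|},\ \frac{1+|1+hp_1|}{\big|1-|1+hp_0||1+hp_1|\big|}\right\}.$$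
   Context: The solutions of $(\ast\ast)$ are uniform-ultimately bounded for a bound $B>0$ if for every $\alpha>0$ there exists $T(\alpha)>0$ such that for every $\phi_0\in\mathbb{C}$ with $|\phi_0|<\alpha$, the solution $\phi$ of $(\ast\ast)$ with $\phi(0)=\phi_0$ satisfies $|\phi(t)|<B$ for all $t\in\mathbb{T}$ with $t\ge T(\alpha)$. *)

From Stdlib Require Import Reals.
From Coquelicot Require Import Coquelicot.
Open Scope R_scope.

(* The time scale T = {0, h, 2h, ...} is indexed by k : nat, t = k*h.
   A function phi : T -> C is represented as phi : nat -> C, phi k = phi(k h). *)

Definition p_per (p0 p1 : C) (k : nat) : C := if Nat.even k then p0 else p1.

Definition Delta_h (h : R) (phi : nat -> C) (k : nat) : C :=
  Cdiv (Cminus (phi (S k)) (phi k)) (RtoC h).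

Definition is_solution (h : R) (p0 p1 : C) (f : R -> C -> C) (phi : nat -> C) : Prop :=
  forall k : nat,
    Cminus (Delta_h h phi k) (Cmult (p_per p0 p1 k) (phi k)) = f (INR k * h) (phi k).

Definition uniformly_ultimately_bounded (h : R) (p0 p1 : C) (f : R -> C -> C) (B : R) : Prop :=
  forall alpha : R, alpha > 0 ->
  exists T0 : R, T0 > 0 /\
    forall phi : nat -> C, is_solution h p0 p1 f phi ->
      Cmod (phi O) < alpha ->
      forall k : nat, INR k * h >= T0 -> Cmod (phi k) < B.

(* Write x_k = |phi(kh)| and q_k = |1 + h p(kh)|, which alternates between q0 and q1.
   The equation gives phi((k+1)h) = (1 + h p(kh)) phi(kh) + h f(kh, phi(kh)), hence
   x_{k+1} <= q_k x_k + hL, and over two steps x_{k+2} <= q0 q1 x_k + h (1 + q_{k+1}) L.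
   As h (1 + q_i) <= (1 - q0 q1) K0, this says x_{k+2} - L K0 <= q0 q1 (x_k - L K0):
   the excess of x_k over L K0 decays geometrically with ratio q0 q1 < 1, starting from
   x_0, x_1 <= (1 + q0) alpha + hL, so it drops below delta after a time depending only
   on alpha. *)
From Stdlib Require Import Reals Lra Lia.
From Coquelicot Require Import Coquelicot.
Open Scope R_scope.

Lemma geometric_tail_lt (Q A delta : R) :
  0 <= Q < 1 -> 0 < A -> 0 < delta ->
  exists N : nat, forall n : nat, (N <= n)%nat -> Q ^ n * A < delta.
Proof.
  intros HQ HA Hdelta.
  destruct (pow_lt_1_zero Q ltac:(rewrite Rabs_pos_eq; lra) (delta / A)
              ltac:(apply Rdiv_lt_0_compat; lra)) as [N HN].
  exists N. intros n Hn.
  specialize (HN n Hn). rewrite Rabs_pos_eq in HN by (apply pow_le; lra).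
  apply Rmult_lt_compat_r with (r := A) in HN; [|lra].
  unfold Rdiv in HN. rewrite Rmult_assoc, Rinv_l, Rmult_1_r in HN by lra.
  exact HN.
Qed.

Section TwoStepContraction.

Variables (x : nat -> R) (D Q : R).
Hypothesis HQ : 0 <= Q.
Hypothesis Hcontr : forall k, x (S (S k)) - D <= Q * (x k - D).

Lemma two_step_contraction_iter (j n : nat) :
  x (j + 2 * n)%nat - D <= Q ^ n * (x j - D).
Proof.
  induction n as [|n IHn].
  - rewrite Nat.add_0_r. simpl. lra.
  - replace (j + 2 * S n)%nat with (S (S (j + 2 * n))) by lia.
    eapply Rle_trans; [apply Hcontr|].
    simpl. rewrite Rmult_assoc. apply Rmult_le_compat_l; assumption.
Qed.

Lemma two_step_contraction_eventually_lt (A delta : R) (N : nat) :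
  0 <= D -> x 0%nat <= A -> x 1%nat <= A ->
  (forall n, (N <= n)%nat -> Q ^ n * A < delta) ->
  forall k, (2 * N <= k)%nat -> x k < D + delta.
Proof.
  intros HD Hx0 Hx1 Htail k Hk.
  pose proof (Nat.div_mod k 2 ltac:(lia)) as Hdm.
  pose proof (Nat.mod_upper_bound k 2 ltac:(lia)) as Hmod.
  set (n := (k / 2)%nat) in *. set (j := (k mod 2)%nat) in *.
  assert (HxjA : x j - D <= A)
    by (destruct j as [|[|]]; [lra | lra | lia]).
  pose proof (two_step_contraction_iter j n) as Hiter.
  replace (j + 2 * n)%nat with k in Hiter by lia.
  assert (Hpow : 0 <= Q ^ n) by (apply pow_le; lra).
  specialize (Htail n ltac:(lia)).
  assert (Q ^ n * (x j - D) <= Q ^ n * A) by (apply Rmult_le_compat_l; lra).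
  lra.
Qed.

End TwoStepContraction.

Lemma Rmult_le_Rmax_div (h a b c : R) :
  0 <= h -> 0 < c -> h * a <= c * (h * Rmax (a / c) (b / c)).
Proof.
  intros Hh Hc.
  replace (h * a) with (c * (h * (a / c))) by (field; lra).
  apply Rmult_le_compat_l; [lra|].
  apply Rmult_le_compat_l; [lra|apply Rmax_l].
Qed.

Lemma p_per_cases (p0 p1 : C) (k : nat) :
  (p_per p0 p1 k = p0 /\ p_per p0 p1 (S k) = p1) \/
  (p_per p0 p1 k = p1 /\ p_per p0 p1 (S k) = p0).
Proof.
  unfold p_per. rewrite Nat.even_succ, <- Nat.negb_even.
  destruct (Nat.even k); auto.
Qed.

Definition growth (h : R) (p : C) : R := Cmod (Cplus (RtoC 1) (Cmult (RtoC h) p)).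

Definition ultimate_const (h : R) (p0 p1 : C) : R :=
  h * Rmax ((1 + growth h p0) / Rabs (1 - growth h p0 * growth h p1))
           ((1 + growth h p1) / Rabs (1 - growth h p0 * growth h p1)).

Lemma growth_ge_0 (h : R) (p : C) : 0 <= growth h p.
Proof. apply Cmod_ge_0. Qed.

Lemma growth_le_ultimate_const (h : R) (p0 p1 p : C) :
  0 <= h -> growth h p0 * growth h p1 < 1 -> p = p0 \/ p = p1 ->
  h * (1 + growth h p) <= (1 - growth h p0 * growth h p1) * ultimate_const h p0 p1.
Proof.
  intros Hh HQ Hp.
  rewrite <- (Rabs_pos_eq (1 - growth h p0 * growth h p1)) by lra.
  unfold ultimate_const.
  destruct Hp as [-> | ->]; [|rewrite Rmax_comm];
    (apply Rmult_le_Rmax_div; [lra | rewrite Rabs_pos_eq; lra]).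
Qed.

Lemma ultimate_const_ge_0 (h : R) (p0 p1 : C) :
  0 <= h -> growth h p0 * growth h p1 < 1 -> 0 <= ultimate_const h p0 p1.
Proof.
  intros Hh HQ.
  pose proof (growth_le_ultimate_const h p0 p1 p0 Hh HQ (or_introl eq_refl)).
  pose proof (growth_ge_0 h p0).
  nra.
Qed.

Section Solutions.

Variables (h L : R) (p0 p1 : C) (f : R -> C -> C) (phi : nat -> C).
Hypothesis Hh : 0 < h.
Hypothesis Hf : forall (k : nat) (z : C), Cmod (f (INR k * h) z) <= L.
Hypothesis Hphi : is_solution h p0 p1 f phi.

Lemma solution_succ (k : nat) :
  phi (S k) = Cplus (Cmult (Cplus (RtoC 1) (Cmult (RtoC h) (p_per p0 p1 k))) (phi k))
                    (Cmult (RtoC h) (f (INR k * h) (phi k))).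
Proof.
  rewrite <- (Hphi k). unfold Delta_h. field.
  intro E. injection E. lra.
Qed.

Lemma Cmod_solution_succ_le (k : nat) :
  Cmod (phi (S k)) <= growth h (p_per p0 p1 k) * Cmod (phi k) + h * L.
Proof.
  rewrite solution_succ. unfold growth.
  eapply Rle_trans; [apply Cmod_triangle|].
  rewrite !Cmod_mult, Cmod_R, Rabs_pos_eq by lra.
  specialize (Hf k (phi k)). nra.
Qed.

Lemma Cmod_solution_two_step_le (k : nat) :
  Cmod (phi (S (S k))) <=
  growth h p0 * growth h p1 * Cmod (phi k) + h * (1 + growth h (p_per p0 p1 (S k))) * L.
Proof.
  pose proof (Cmod_solution_succ_le k) as Hstep0.
  pose proof (Cmod_solution_succ_le (S k)) as Hstep1.
  pose proof (growth_ge_0 h (p_per p0 p1 (S k))).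
  assert (Hstep01 : Cmod (phi (S (S k))) <=
    growth h (p_per p0 p1 (S k)) * (growth h (p_per p0 p1 k) * Cmod (phi k) + h * L) + h * L)
    by nra.
  destruct (p_per_cases p0 p1 k) as [[E0 E1]|[E0 E1]];
    rewrite E1 in Hstep01 |- *; rewrite E0 in Hstep01; nra.
Qed.

Hypothesis HQ : growth h p0 * growth h p1 < 1.

Lemma Cmod_solution_two_step_contraction (k : nat) :
  Cmod (phi (S (S k))) - L * ultimate_const h p0 p1 <=
  growth h p0 * growth h p1 * (Cmod (phi k) - L * ultimate_const h p0 p1).
Proof.
  pose proof (Cmod_solution_two_step_le k).
  assert (HL : 0 <= L) by (eapply Rle_trans; [apply Cmod_ge_0 | apply (Hf 0%nat (phi 0%nat))]).
  assert (h * (1 + growth h (p_per p0 p1 (S k))) * L <=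
          (1 - growth h p0 * growth h p1) * ultimate_const h p0 p1 * L).
  { apply Rmult_le_compat_r; [lra|].
    apply growth_le_ultimate_const; [lra | lra | destruct (p_per_cases p0 p1 k); tauto]. }
  lra.
Qed.

End Solutions.

Theorem corollary3p1 (h : R) (p0 p1 : C) (f : R -> C -> C) (delta L : R) :
  h > 0 ->
  p0 <> RtoC (- / h) -> p1 <> RtoC (- / h) -> p0 <> p1 ->
  delta > 0 ->
  L > 0 ->
  (forall (k : nat) (z : C), Cmod (f (INR k * h) z) <= L) ->
  (forall phi0 : C, exists phi : nat -> C, is_solution h p0 p1 f phi /\ phi O = phi0) ->
  0 < Cmod (Cplus (RtoC 1) (Cmult (RtoC h) p0)) * Cmod (Cplus (RtoC 1) (Cmult (RtoC h) p1)) < 1 ->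
  let q0 := Cmod (Cplus (RtoC 1) (Cmult (RtoC h) p0)) in
  let q1 := Cmod (Cplus (RtoC 1) (Cmult (RtoC h) p1)) in
  let K0 := h * Rmax ((1 + q0) / Rabs (1 - q0 * q1)) ((1 + q1) / Rabs (1 - q0 * q1)) in
  uniformly_ultimately_bounded h p0 p1 f (L * K0 + delta).
Proof.
  intros Hh _ _ _ Hdelta HL Hf _ HQ q0 q1 K0.
  change K0 with (ultimate_const h p0 p1).
  change (0 < growth h p0 * growth h p1 < 1) in HQ.
  pose proof (growth_ge_0 h p0) as Hq0.
  pose proof (ultimate_const_ge_0 h p0 p1 ltac:(lra) ltac:(lra)) as HK0.
  intros alpha Halpha.
  set (A := (1 + growth h p0) * alpha + h * L).
  destruct (geometric_tail_lt (growth h p0 * growth h p1) A delta) as [N HN];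
    [lra | unfold A; nra | lra |].
  exists (INR (S (2 * N)) * h).
  split; [apply Rmult_lt_0_compat; [apply lt_0_INR; lia | lra]|].
  intros phi Hphi Hphi0 k Hk.
  apply two_step_contraction_eventually_lt
    with (x := fun k => Cmod (phi k)) (Q := growth h p0 * growth h p1) (A := A) (N := N).
  - lra.
  - exact (Cmod_solution_two_step_contraction h L p0 p1 f phi Hh Hf Hphi ltac:(lra)).
  - nra.
  - unfold A. nra.
  - pose proof (Cmod_solution_succ_le h L p0 p1 f phi Hh Hf Hphi 0) as Hstep.
    change (p_per p0 p1 0) with p0 in Hstep. cbv beta. unfold A. nra.
  - exact HN.
  - apply INR_le, Rmult_le_reg_r with h; [lra|]. rewrite S_INR in Hk. lra.
Qed.
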